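(* Dynamic A* with \texttt{reeval} set to true and using a dyn-monotonic, dyn-consistent dynamic heuristic never reopens a state, i.e., it never removes a state from Closed.
   Context: A transition system is $\mathcal T=\langle S,L,c,T,s_I,S_G\rangle$ with finite states $S$, finite labels $L$, cost function $c:L\to\mathbb R_{\ge0}$, transitions $T\subseteq S\times L\times S$, initial state $s_I$, goal states $S_G\subseteq S$. An information source $\sigma$ consists of a set $\mathcal I_\sigma$, $\iota_0^\sigma\in\mathcal I_\sigma$, $\mathrm{update}_\sigma:\mathcal I_\sigma\times T\to\mathcal I_\sigma$, $\mathrm{refine}_\sigma:\mathcal I_\sigma\times S\to\mathcal I_\sigma$. Reachable information: $\iota_n$ is reachable if obtained from $\iota_0^\sigma$ by a sequence of refine steps on states and update steps on transitions $e_1,\dots,e_n$, where each refined state and each origin of an updated transition is $s_I$ or the target of an earlier updated transition. A dynamic heuristic over $\sigma$ is $h:S\times\mathcal I_\sigma\to\mathbb R_{\ge0}\cup\{\infty\}$. It is dyn-consistent if $h(s,\iota)\le c(\ell)+h(s',\iota)$ for all $\langle s,\ell,s'\rangle\in T$ and all reachable $\iota$; and dyn-monotonic if $h(s,\iota)\le h(s,\mathrm{update}_\sigma(\iota,t))$ and $h(s,\iota)\le h(s,\mathrm{refine}_\sigma(\iota,s'))$ for all reachable $\iota$, all $s,s'\in S$, all $t\in T$. Parent source $\sigma_p$: $\mathcal I_{\sigma_p}$ = partial functions $S\rightharpoonup\mathbb R_{\ge0}\times(T\cup\{\bot\})$; $\iota_0=\{s_I\mapsto\langle0,\bot\rangle\}$;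 refine is the identity; $\mathrm{update}(\iota,\langle s,\ell,s'\rangle)$ with $\iota(s)=\langle g,\cdot\rangle$ changes only $s'$, setting it to $\langle g+c(\ell),\langle s,\ell,s'\rangle\rangle$ if $\iota(s')$ is undefined or has $g$-component $\ge g+c(\ell)$, otherwise unchanged. Dynamic A* takes $\mathcal T$, sources $\sigma_p,\sigma_h$, a dynamic heuristic $h$ over $\sigma_h$ and a Boolean flag \texttt{reeval}. Notation: at any moment $g(s)$ is the $g$-component of the current $\mathcal I(\sigma_p)(s)$ and $h(s)$ denotes $h(s,\mathcal I(\sigma_h))$ for the current $\mathcal I(\sigma_h)$. Open is a priority queue of entries $\langle s,g,h\rangle$ (duplicates allowed), popped by minimal stored value $g+h$ (ties arbitrary). Algorithm: 1. $\mathcal I(\sigma):=\iota_0^\sigma$ for both sources; $S_{\mathrm{known}}:=\{s_I\}$; Closed $:=\emptyset$; Open empty. If $h(s_I)<\infty$ insert $\langle s_I,g(s_I),h(s_I)\rangle$. 2. While Open is nonempty: pop an entry $\langle s,\hat g,\hat h\rangle$ of minimal $\hat g+\hat h$. If $s\in$ Closed, continue with the next iteration. Otherwise set $\mathcal I(\sigma):=\mathrm{refine}_\sigma(\mathcal I(\sigma),s)$ for both sources. If \texttt{reeval} is true and $\hat h<h(s)$: if $h(s)<\infty$ insert $\langle s,g(s),h(s)\rangle$; continue with the next iteration (this is a re-evaluation). Otherwise add $s$ to Closed ($s$ is expanded). If $s\in S_G$, return the path obtained by following the parent pointers of $\mathcal I(\sigma_p)$ from $s$ back to $s_I$. Otherwise,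 for each $t=\langle s,\ell,s'\rangle\in T$ in some order: let $old:=g(s')$ if $s'\in S_{\mathrm{known}}$ and undefined otherwise; set $\mathcal I(\sigma):=\mathrm{update}_\sigma(\mathcal I(\sigma),t)$ for both sources; add $s'$ to $S_{\mathrm{known}}$; if $h(s')=\infty$ skip $s'$; else if $old$ is undefined insert $\langle s',g(s'),h(s')\rangle$; else if $old>g(s')$, remove $s'$ from Closed if it is there (reopening) and insert $\langle s',g(s'),h(s')\rangle$. 3. Return ''unsolvable''. *)

From HB Require Import structures.
From mathcomp Require Import all_boot all_order all_algebra.
From mathcomp Require Import reals.
Set Implicit Arguments.
Unset Printing Implicit Defensive.
Import Order.TTheory GRing.Theory Num.Theory.
Local Open Scope ring_scope.

Definition trans (S L : finType) := (S * L * S)%type.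
Definition src  {S L : finType} (t : trans S L) : S := t.1.1.
Definition lab  {S L : finType} (t : trans S L) : L := t.1.2.
Definition tgt  {S L : finType} (t : trans S L) : S := t.2.

Record TS (R : realType) := {
  ts_S : finType;
  ts_L : finType;
  ts_c : ts_L -> R;
  ts_T : {set trans ts_S ts_L};
  ts_sI : ts_S;
  ts_SG : {set ts_S}
}.

Arguments ts_S {R} t.
Arguments ts_L {R} t.
Arguments ts_c {R} t _.
Arguments ts_T {R} t.
Arguments ts_sI {R} t.
Arguments ts_SG {R} t.

Definition wf_TS (R : realType) (M : TS R) : Prop :=
  forall l, 0 <= ts_c M l.

(* Extended non-negative values  R_{>=0} ∪ {∞}: None stands for ∞.     *)

Definition ext_le (R : realType) (x y : option R) : bool :=
  match x, y with
  | _, None => true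
  | None, Some _ => false
  | Some a, Some b => a <= b
  end.
Arguments ext_le {R} x y.

Definition ext_lt (R : realType) (x y : option R) : bool :=
  match x, y with
  | None, _ => false
  | Some _, None => true
  | Some a, Some b => a < b
  end.
Arguments ext_lt {R} x y.

Definition ext_addl (R : realType) (a : R) (y : option R) : option R :=
  match y with None => None | Some b => Some (a + b) end.
Arguments ext_addl {R} a y.

Record source (S L : finType) := {
  src_I : Type;
  src_init : src_I;
  src_update : src_I -> trans S L -> src_I;
  src_refine : src_I -> S -> src_I
}.

(* [reach_info sg iota ks]: iota is obtained from iota_0 by refine steps
   and update steps on transitions of T, where every refined state and
   every origin of an updated transition is s_I or the target of an
   earlier updated transition; ks lists those targets. *)
Inductive reach_info (R : realType) (M : TS R) (sg : source (ts_S M) (ts_L M))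
  : src_I sg -> seq (ts_S M) -> Prop :=
| ri_init : @reach_info R M sg (src_init sg) [::]
| ri_refine : forall i ks s,
    @reach_info R M sg i ks -> (s = ts_sI M \/ s \in ks) ->
    @reach_info R M sg (src_refine sg i s) ks
| ri_update : forall i ks t,
    @reach_info R M sg i ks -> t \in ts_T M ->
    (src t = ts_sI M \/ src t \in ks) ->
    @reach_info R M sg (src_update sg i t) (tgt t :: ks).

Definition reachable_info (R : realType) (M : TS R)
  (sg : source (ts_S M) (ts_L M)) (i : src_I sg) : Prop :=
  exists ks, @reach_info R M sg i ks.
Arguments reachable_info {R M} sg i.

Definition dyn_heuristic (R : realType) (M : TS R)
  (sg : source (ts_S M) (ts_L M)) :=
  ts_S M -> src_I sg -> option R.
Arguments dyn_heuristic {R M} sg.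

Definition heuristic_nonneg (R : realType) (M : TS R)
  (sg : source (ts_S M) (ts_L M)) (h : dyn_heuristic sg) : Prop :=
  forall s i v, h s i = Some v -> 0 <= v.
Arguments heuristic_nonneg {R M sg} h.

Definition dyn_consistent (R : realType) (M : TS R)
  (sg : source (ts_S M) (ts_L M)) (h : dyn_heuristic sg) : Prop :=
  forall t, t \in ts_T M -> forall i, reachable_info sg i ->
    ext_le (h (src t) i) (ext_addl (ts_c M (lab t)) (h (tgt t) i)).
Arguments dyn_consistent {R M sg} h.

Definition dyn_monotonic (R : realType) (M : TS R)
  (sg : source (ts_S M) (ts_L M)) (h : dyn_heuristic sg) : Prop :=
  forall i, reachable_info sg i ->
    (forall s t, t \in ts_T M -> ext_le (h s i) (h s (src_update sg i t))) /\
    (forall s s', ext_le (h s i) (h s (src_refine sg i s'))).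
Arguments dyn_monotonic {R M sg} h.

(* I = partial functions S ⇀ R_{>=0} × (T ∪ {⊥}); None = undefined,    *)
(* parent None = ⊥.                                                    *)

Definition pinfo (R : realType) (S L : finType) :=
  S -> option (R * option (trans S L)).

Definition parent_init (R : realType) (S L : finType) (sI : S) : pinfo R S L :=
  fun s => if s == sI then Some (0, None) else None.
Arguments parent_init R {S L} sI.

Definition parent_refine (R : realType) (S L : finType)
  (i : pinfo R S L) (_ : S) : pinfo R S L := i.
Arguments parent_refine {R S L} i _.

(* If iota(s) is undefined the update is left unspecified by the paper;
   we leave iota unchanged (this case never arises in Dynamic A-star). *)
Definition parent_update (R : realType) (S L : finType) (c : L -> R)
  (i : pinfo R S L) (t : trans S L) : pinfo R S L :=
  match i (src t) with
  | None => i
  | Some (g, _) =>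
      let gn := g + c (lab t) in
      let upd := match i (tgt t) with
                 | None => true
                 | Some (g', _) => gn <= g'
                 end in
      if upd then
        fun x => if x == tgt t then Some (gn, Some t) else i x
      else i
  end.
Arguments parent_update {R S L} c i t.

Definition parent_source (R : realType) (M : TS R) : source (ts_S M) (ts_L M) :=
  {| src_I := pinfo R (ts_S M) (ts_L M);
     src_init := parent_init R (ts_sI M);
     src_update := parent_update (ts_c M);
     src_refine := parent_refine |}.

(* g-component of the current parent information (0 if undefined; in
   Dynamic A-star it is only read on known states, where it is defined). *)
Definition gof (R : realType) (S L : finType) (i : pinfo R S L) (s : S) : R :=
  match i s with Some (g, _) => g | None => 0 end.
Arguments gof {R S L} i s.

(* Nondeterminism: tie-breaking in Open and the order in which the     *)
(* outgoing transitions of an expanded state are processed.            *)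

Inductive status := Running | Finished.

Record config (R : realType) (M : TS R) (sh : source (ts_S M) (ts_L M)) := {
  c_ip : pinfo R (ts_S M) (ts_L M);
  c_ih : src_I sh;
  c_known : {set ts_S M};
  c_closed : {set ts_S M};
  c_open : seq (ts_S M * R * R);             (* entries <s, g, h> *)
  c_pending : seq (trans (ts_S M) (ts_L M)); (* rest of the for-loop *)
  c_status : status
}.

Definition mkcfg (R : realType) (M : TS R) (sh : source (ts_S M) (ts_L M))
  ip ih known closed op pend st : config M sh :=
  {| c_ip := ip; c_ih := ih; c_known := known; c_closed := closed;
     c_open := op; c_pending := pend; c_status := st |}.
Arguments mkcfg {R M sh} ip ih known closed op pend st.

Definition entry_key (R : realType) (S : Type) (e : S * R * R) : R :=
  e.1.2 + e.2.
Arguments entry_key {R S} e.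

Definition init_config (R : realType) (M : TS R) (sh : source (ts_S M) (ts_L M))
  (h : dyn_heuristic sh) : config M sh :=
  let ip := parent_init R (ts_sI M) in
  let ih := src_init sh in
  mkcfg ip ih [set ts_sI M] set0
    (match h (ts_sI M) ih with
     | Some v => [:: (ts_sI M, gof ip (ts_sI M), v)]
     | None => [::]
     end)
    [::] Running.
Arguments init_config {R M sh} h.

Inductive astar_step (R : realType) (M : TS R) (sh : source (ts_S M) (ts_L M))
  (h : dyn_heuristic sh) (reeval : bool) : config M sh -> config M sh -> Prop :=
| st_unsolvable : forall (ip : pinfo R (ts_S M) (ts_L M)) (ih : src_I sh) (kn cl : {set ts_S M}),
    @astar_step R M sh h reeval (mkcfg ip ih kn cl [::] [::] Running)
                        (mkcfg ip ih kn cl [::] [::] Finished)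
| st_pop_closed : forall (ip : pinfo R (ts_S M) (ts_L M)) (ih : src_I sh) (kn cl : {set ts_S M}) (op : seq (ts_S M * R * R)) (e : ts_S M * R * R),
    e \in op -> (forall e', e' \in op -> entry_key e <= entry_key e') ->
    e.1.1 \in cl ->
    @astar_step R M sh h reeval (mkcfg ip ih kn cl op [::] Running)
                        (mkcfg ip ih kn cl (rem e op) [::] Running)
| st_reeval : forall (ip : pinfo R (ts_S M) (ts_L M)) (ih : src_I sh) (kn cl : {set ts_S M}) (op : seq (ts_S M * R * R)) (e : ts_S M * R * R),
    e \in op -> (forall e', e' \in op -> entry_key e <= entry_key e') ->
    e.1.1 \notin cl ->
    let s := e.1.1 in
    let ip' := parent_refine ip s in
    let ih' := src_refine sh ih s in
    reeval && ext_lt (Some e.2) (h s ih') ->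
    @astar_step R M sh h reeval (mkcfg ip ih kn cl op [::] Running)
      (mkcfg ip' ih' kn cl
         (match h s ih' with
          | Some v => rcons (rem e op) (s, gof ip' s, v)
          | None => rem e op
          end) [::] Running)
| st_expand_goal : forall (ip : pinfo R (ts_S M) (ts_L M)) (ih : src_I sh) (kn cl : {set ts_S M}) (op : seq (ts_S M * R * R)) (e : ts_S M * R * R),
    e \in op -> (forall e', e' \in op -> entry_key e <= entry_key e') ->
    e.1.1 \notin cl ->
    let s := e.1.1 in
    let ip' := parent_refine ip s in
    let ih' := src_refine sh ih s in
    ~~ (reeval && ext_lt (Some e.2) (h s ih')) ->
    s \in ts_SG M ->
    @astar_step R M sh h reeval (mkcfg ip ih kn cl op [::] Running)
      (mkcfg ip' ih' kn (s |: cl) (rem e op) [::] Finished)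
| st_expand : forall (ip : pinfo R (ts_S M) (ts_L M)) (ih : src_I sh) (kn cl : {set ts_S M}) (op : seq (ts_S M * R * R)) (e : ts_S M * R * R) (pend : seq (trans (ts_S M) (ts_L M))),
    e \in op -> (forall e', e' \in op -> entry_key e <= entry_key e') ->
    e.1.1 \notin cl ->
    let s := e.1.1 in
    let ip' := parent_refine ip s in
    let ih' := src_refine sh ih s in
    ~~ (reeval && ext_lt (Some e.2) (h s ih')) ->
    s \notin ts_SG M ->
    perm_eq pend (enum [set t in ts_T M | src t == s]) ->
    @astar_step R M sh h reeval (mkcfg ip ih kn cl op [::] Running)
      (mkcfg ip' ih' kn (s |: cl) (rem e op) pend Running)
| st_succ : forall (ip : pinfo R (ts_S M) (ts_L M)) (ih : src_I sh) (kn cl : {set ts_S M}) (op : seq (ts_S M * R * R)) (t : trans (ts_S M) (ts_L M)) (pend : seq (trans (ts_S M) (ts_L M))),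
    let s' := tgt t in
    let old := if s' \in kn then Some (gof ip s') else None in
    let ip' := parent_update (ts_c M) ip t in
    let ih' := src_update sh ih t in
    let kn' := s' |: kn in
    let g' := gof ip' s' in
    @astar_step R M sh h reeval (mkcfg ip ih kn cl op (t :: pend) Running)
      (match h s' ih' with
       | None => mkcfg ip' ih' kn' cl op pend Running
       | Some v =>
           match old with
           | None => mkcfg ip' ih' kn' cl (rcons op (s', g', v)) pend Running
           | Some go =>
               if g' < go then
                 mkcfg ip' ih' kn' (cl :\ s') (rcons op (s', g', v)) pend Running
               else mkcfg ip' ih' kn' cl op pend Running
           end
       end).
Arguments astar_step {R M sh} h reeval _ _.

Inductive astar_reachable (R : realType) (M : TS R) (sh : source (ts_S M) (ts_L M))
  (h : dyn_heuristic sh) (reeval : bool) : config M sh -> Prop :=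
| ar_init : @astar_reachable R M sh h reeval (init_config h)
| ar_step : forall c c', @astar_reachable R M sh h reeval c -> astar_step h reeval c c' ->
    @astar_reachable R M sh h reeval c'.
Arguments astar_reachable {R M sh} h reeval _.

From mathcomp Require Import all_boot all_order all_algebra.
From mathcomp Require Import reals lra.
Set Implicit Arguments.
Unset Strict Implicit.
Unset Printing Implicit Defensive.
Import Order.TTheory GRing.Theory Num.Theory.
Local Open Scope ring_scope.

(* Along every run, each closed state carries an optimal g-value.  When a state
   s is expanded rather than re-evaluated, follow any path to s up to its first
   known state y that is not closed; y has an Open entry of key at most
   g(y) + h(y), while s was popped with minimal key and current h-value at most
   its stored one.  Dyn-monotonicity turns stored h-values into lower bounds of
   current ones and dyn-consistency bounds h(y) by the cost of the rest of the
   path plus h(s), so g(s) is at most the cost of the path.  A closed state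
   thus cannot get a strictly better g-value, the only way to be reopened. *)

Section ExtendedOrder.
Variable R : realType.
Implicit Types a b d : option R.

Lemma ext_le_trans a b d : ext_le a b -> ext_le b d -> ext_le a d.
Proof. by case: a => [a|]; case: b => [b|]; case: d => [d|] //=; exact: le_trans. Qed.

Lemma ext_le_addl_trans a b d (u v : R) :
  ext_le a (ext_addl u b) -> ext_le b (ext_addl v d) -> ext_le a (ext_addl (u + v) d).
Proof. by case: a => [a|]; case: b => [b|]; case: d => [d|] //=; lra. Qed.

Lemma ext_le_addl0 a : ext_le a (ext_addl 0 a).
Proof. by case: a => [a|] //=; rewrite add0r. Qed.

Lemma ext_le_finite a b : ext_le a b -> b <> None -> a <> None.
Proof. by case: a; case: b. Qed.

End ExtendedOrder.

Lemma rem_rcons (T : eqType) (x y : T) (s : seq T) :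
  x \in s -> rem x (rcons s y) = rcons (rem x s) y.
Proof. by elim: s => //= z s IH; rewrite inE eq_sym; case: eqP => //= _ /IH ->. Qed.

Section ParentUpdate.
Variables (R : realType) (S L : finType) (c : L -> R).
Implicit Types (ip : pinfo R S L) (t : trans S L).

Lemma parent_updateE ip t x :
  parent_update c ip t x =
  if ip (src t) is Some (g, _) then
    if (x == tgt t) && (if ip (tgt t) is Some (g', _) then g + c (lab t) <= g' else true)
    then Some (g + c (lab t), Some t) else ip x
  else ip x.
Proof.
rewrite /parent_update; case: (ip (src t)) => [[g p]|] //.
case: (ip (tgt t)) => [[g' p']|] /=; last by rewrite andbT.
by case: (g + c (lab t) <= g'); rewrite ?andbT ?andbF.
Qed.

Lemma parent_update_other ip t x : x != tgt t -> parent_update c ip t x = ip x.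
Proof. by move=> Nx; rewrite parent_updateE (negbTE Nx); case: (ip (src t)) => [[]|]. Qed.

Lemma parent_update_tgtP ip t g p : ip (src t) = Some (g, p) ->
  parent_update c ip t (tgt t) = Some (g + c (lab t), Some t) \/
  parent_update c ip t (tgt t) = ip (tgt t) /\
    exists go p', ip (tgt t) = Some (go, p') /\ go < g + c (lab t).
Proof.
move=> Es; rewrite parent_updateE Es eqxx /=.
case: (ip (tgt t)) => [[go p']|]; last by left.
by case: leP => Hle; [left | right; split => //; exists go, p'].
Qed.

Lemma parent_update_defined ip t x : ip x <> None -> parent_update c ip t x <> None.
Proof. by rewrite parent_updateE; case: (ip (src t)) => [[g p]|] //; case: ifP. Qed.

Lemma parent_update_tgt_defined ip t g p :
  ip (src t) = Some (g, p) -> parent_update c ip t (tgt t) <> None.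
Proof. by move=> /parent_update_tgtP [-> | [-> [go [p' [-> _]]]]]. Qed.

Lemma gof_parent_update_other ip t x : x != tgt t -> gof (parent_update c ip t) x = gof ip x.
Proof. by rewrite /gof => /parent_update_other ->. Qed.

Lemma gof_parent_update_le ip t x : ip x <> None -> gof (parent_update c ip t) x <= gof ip x.
Proof.
have [-> | Nx] := eqVneq x (tgt t); last by rewrite gof_parent_update_other.
rewrite /gof parent_updateE eqxx /=; case: (ip (src t)) => [[g p]|] //.
by case: (ip (tgt t)) => [[go p']|] //= _; case: ifP.
Qed.

Lemma gof_parent_update_tgt_le ip t g p :
  ip (src t) = Some (g, p) -> gof (parent_update c ip t) (tgt t) <= g + c (lab t).
Proof.
move=> /parent_update_tgtP [E | [E [go [p' [E' Hlt]]]]]; rewrite /gof E //.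
by rewrite E' ltW.
Qed.

Lemma gof_parent_update_tgt_eq ip t g p :
  ip (src t) = Some (g, p) -> ip (tgt t) <> None -> gof ip (tgt t) <= g + c (lab t) ->
  gof (parent_update c ip t) (tgt t) = gof ip (tgt t).
Proof.
move=> Es Ed Hle; apply/eqP; rewrite eq_le gof_parent_update_le //=.
by case: (parent_update_tgtP Es) => [E | [E _]]; move: Hle; rewrite /gof E.
Qed.

End ParentUpdate.

Section DynamicAstar.
Variables (R : realType) (M : TS R) (sh : source (ts_S M) (ts_L M)).
Variable h : dyn_heuristic sh.
Hypothesis h_consistent : dyn_consistent h.
Hypothesis h_monotonic : dyn_monotonic h.

Local Notation state := (ts_S M).
Local Notation sI := (ts_sI M).
Local Notation cost := (ts_c M).

Inductive path_cost : state -> R -> Prop :=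
| path_cost_init : path_cost sI 0
| path_cost_step t g :
    path_cost (src t) g -> t \in ts_T M -> path_cost (tgt t) (g + cost (lab t)).

Lemma parent_update_path_cost (ip : pinfo R state (ts_L M)) t :
  (forall x g p, ip x = Some (g, p) -> path_cost x g) -> t \in ts_T M ->
  forall x g p, parent_update cost ip t x = Some (g, p) -> path_cost x g.
Proof.
move=> Hip Ht x g p; rewrite parent_updateE.
case Es: (ip (src t)) => [[gs ps]|]; last exact: Hip.
case: ifP => [/andP [/eqP -> _] [<- _] | _]; last exact: Hip.
exact: path_cost_step (Hip _ _ _ Es) Ht.
Qed.

(* Open entries may be stale: their stored g- and h-values only bound the current
   ones, the latter thanks to dyn-monotonicity. *)
Record astar_inv (ip : pinfo R state (ts_L M)) (ih : src_I sh) (kn cl : {set state})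
    (op : seq (state * R * R)) (pend : seq (trans state (ts_L M))) : Prop := {
  inv_reach : exists ks, @reach_info R M sh ih ks /\ forall x, x \in kn -> x = sI \/ x \in ks;
  inv_init_known : sI \in kn;
  inv_init_g : gof ip sI <= 0;
  inv_g_path : forall x g p, ip x = Some (g, p) -> path_cost x g;
  inv_known_defined : forall x, x \in kn -> ip x <> None;
  inv_open : forall e, e \in op ->
    [/\ e.1.1 \in kn, gof ip e.1.1 <= e.1.2 & ext_le (Some e.2) (h e.1.1 ih)];
  inv_closed_opt : forall x, x \in cl -> x \in kn /\ forall C, path_cost x C -> gof ip x <= C;
  inv_closed_succ : forall x t, x \in cl -> t \in ts_T M -> src t = x -> t \notin pend ->
    tgt t \in kn /\ gof ip (tgt t) <= gof ip x + cost (lab t);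
  inv_open_known : forall x, x \in kn -> x \notin cl -> h x ih <> None ->
    exists2 e, e \in op & e.1.1 = x /\ e.1.2 <= gof ip x;
  inv_pending : forall t, t \in pend -> t \in ts_T M /\ src t \in cl }.

Section Invariant.
Variables (ip : pinfo R state (ts_L M)) (ih : src_I sh) (kn cl : {set state}).
Variables (op : seq (state * R * R)) (pend : seq (trans state (ts_L M))).
Hypothesis Hinv : astar_inv ip ih kn cl op pend.

Lemma inv_reachable_info : reachable_info sh ih.
Proof. by have [ks [Hks _]] := inv_reach Hinv; exists ks. Qed.

Lemma inv_gof_known x : x \in kn -> exists p, ip x = Some (gof ip x, p).
Proof. by move/(inv_known_defined Hinv); rewrite /gof; case: (ip x) => [[g p]|] // _; exists p. Qed.

Lemma astar_inv_refine s : s \in kn -> astar_inv ip (src_refine sh ih s) kn cl op pend.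
Proof.
move=> Hs; have Hmono x := (h_monotonic inv_reachable_info).2 x s.
case: Hinv => [[ks [Hks Hkn]]] HI Hg Hp Hd Ho Hc Hcs Hk Hpd; split => //.
- by exists ks; split => //; apply: ri_refine Hks (Hkn s Hs).
- by move=> e /Ho [He1 He2 He3]; split => //; exact: ext_le_trans He3 (Hmono _).
- by move=> x Hx Hxc /(ext_le_finite (Hmono x)); exact: Hk.
Qed.

Lemma astar_inv_push s v :
  s \in kn -> h s ih = Some v -> astar_inv ip ih kn cl (rcons op (s, gof ip s, v)) pend.
Proof.
move=> Hs Ev; case: Hinv => HR HI Hg Hp Hd Ho Hc Hcs Hk Hpd; split => //.
- by move=> e; rewrite mem_rcons inE => /orP [/eqP -> | /Ho] //=; rewrite Ev.
- move=> x Hx Hxc /(Hk x Hx Hxc) [e He Hex].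
  by exists e => //; rewrite mem_rcons inE He orbT.
Qed.

Lemma astar_inv_rem e :
  (e.1.1 \notin cl -> h e.1.1 ih <> None ->
     exists2 e', e' \in rem e op & e'.1.1 = e.1.1 /\ e'.1.2 <= gof ip e.1.1) ->
  astar_inv ip ih kn cl (rem e op) pend.
Proof.
move=> Hwit; case: Hinv => HR HI Hg Hp Hd Ho Hc Hcs Hk Hpd; split => //.
- by move=> e' /mem_rem; exact: Ho.
- move=> x Hx; case: (eqVneq x e.1.1) => [-> | Nx] Hxc Hh; first exact: Hwit.
  have [e' He' [Ex Hle]] := Hk x Hx Hxc Hh; exists e' => //.
  by apply: rem_mem He'; apply: contra_neq Nx => Ee; rewrite -Ex Ee.
Qed.

Lemma astar_inv_close s pend' :
  pend = [::] -> s \in kn -> (forall C, path_cost s C -> gof ip s <= C) ->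
  perm_eq pend' (enum [set t in ts_T M | src t == s]) ->
  astar_inv ip ih kn (s |: cl) op pend'.
Proof.
move=> Epend Hs Hopt Hperm.
have Hpend t : (t \in pend') = (t \in ts_T M) && (src t == s).
  by rewrite (perm_mem Hperm) mem_enum inE.
case: Hinv => HR HI Hg Hp Hd Ho Hc Hcs Hk Hpd; split => //.
- by move=> x; rewrite !inE => /orP [/eqP -> | /Hc].
- move=> x t; rewrite !inE => /orP [/eqP -> | Hx] Ht Hsrc; first by rewrite Hpend Ht Hsrc eqxx.
  by move=> _; apply: Hcs; rewrite // Epend.
- by move=> x Hx; rewrite !inE negb_or => /andP [_]; exact: Hk.
- by move=> t; rewrite Hpend => /andP [Ht /eqP <-]; rewrite setU11.
Qed.

End Invariant.

Section Frontier.
Variables (ip : pinfo R state (ts_L M)) (ih : src_I sh) (kn cl : {set state}).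
Variable op : seq (state * R * R).
Hypothesis Hinv : astar_inv ip ih kn cl op [::].

Lemma path_cost_frontier i : reachable_info sh i -> forall x C, path_cost x C ->
  x \in cl \/ exists y Cy,
    [/\ y \in kn, y \notin cl, gof ip y <= Cy & ext_le (h y i) (ext_addl (C - Cy) (h x i))].
Proof.
move=> Hi x C; elim=> [|t g Hpc IH Ht].
  case: (boolP (sI \in cl)) => HsI; [by left | right].
  exists sI, 0; split; rewrite ?subrr ?ext_le_addl0 //.
    exact: inv_init_known Hinv.
  exact: inv_init_g Hinv.
case: (boolP (tgt t \in cl)) => Htc; [by left | right].
case: IH => [Hs | [y [Cy [Hy Hyc Hgy Hhy]]]].
  have [Hk Hle] := inv_closed_succ Hinv Hs Ht erefl isT.
  exists (tgt t), (g + cost (lab t)); split; rewrite ?subrr ?ext_le_addl0 //.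
  by apply: le_trans Hle _; rewrite lerD2r; exact: (inv_closed_opt Hinv Hs).2 _ Hpc.
exists y, Cy; split => //; rewrite addrAC.
exact: ext_le_addl_trans Hhy (h_consistent Ht Hi).
Qed.

Lemma popped_gof_opt e :
  e \in op -> (forall e', e' \in op -> entry_key e <= entry_key e') -> e.1.1 \notin cl ->
  ~~ ext_lt (Some e.2) (h e.1.1 ih) ->
  forall C, path_cost e.1.1 C -> gof ip e.1.1 <= C.
Proof.
move=> He Hmin Hcl Hnlt C HC.
have [_ Hge _] := inv_open Hinv He.
case: (path_cost_frontier (inv_reachable_info Hinv) HC) => [Hin | [y [Cy [Hy Hyc Hgy]]]].
  by rewrite Hin in Hcl.
move: Hnlt; case Es: (h e.1.1 ih) => [hs|] //=; rewrite -leNgt => Hhs.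
case Ey: (h y ih) => [hy|] //= Hhy.
have Hyfin : h y ih <> None by rewrite Ey.
have [e' He' [Ey' Hge']] := inv_open_known Hinv Hy Hyc Hyfin.
have [_ _] := inv_open Hinv He'; rewrite Ey' Ey /= => Hh'.
(* g(s) + h(s) <= key e <= key e' <= g(y) + h(y) <= Cy + (C - Cy) + h(s) *)
have := Hmin e' He'; rewrite /entry_key; lra.
Qed.

End Frontier.

Section Successor.
Variables (ip : pinfo R state (ts_L M)) (ih : src_I sh) (kn cl : {set state}).
Variables (op : seq (state * R * R)) (t : trans state (ts_L M)) (pend : seq (trans state (ts_L M))).
Hypothesis Hinv : astar_inv ip ih kn cl op (t :: pend).

Local Notation s' := (tgt t).
Local Notation ip' := (parent_update cost ip t).
Local Notation ih' := (src_update sh ih t).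

Lemma pending_src_gof :
  [/\ t \in ts_T M, src t \in kn & exists p, ip (src t) = Some (gof ip (src t), p)].
Proof.
have [Ht /(inv_closed_opt Hinv) [Hk _]] := inv_pending Hinv (mem_head t pend).
by split=> //; apply: inv_gof_known (Hinv) _ Hk.
Qed.

(* a closed state is optimal, so the candidate g(src t) + c(t) cannot improve it *)
Lemma closed_gof_parent_update x : x \in cl -> gof ip' x = gof ip x.
Proof.
case: (eqVneq x s') => [-> | Nx] Hx; last exact: gof_parent_update_other.
have [Ht _ [p Es]] := pending_src_gof; have [Hk Hopt] := inv_closed_opt Hinv Hx.
have Hpath := path_cost_step (inv_g_path Hinv Es) Ht.
exact: gof_parent_update_tgt_eq Es (inv_known_defined Hinv Hk) (Hopt _ Hpath).
Qed.

Lemma astar_inv_succ op' :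
  (op' = op /\ (h s' ih' = None \/ s' \in kn /\ gof ip' s' = gof ip s')) \/
  (exists v, h s' ih' = Some v /\ op' = rcons op (s', gof ip' s', v)) ->
  astar_inv ip' ih' (s' |: kn) cl op' pend.
Proof.
move=> Hop; have [Ht Hsk [p Es]] := pending_src_gof.
have Hmono x : ext_le (h x ih) (h x ih') := (h_monotonic (inv_reachable_info Hinv)).1 x t Ht.
have Hgle x : x \in kn -> gof ip' x <= gof ip x.
  by move=> Hx; apply: gof_parent_update_le (inv_known_defined Hinv Hx).
have Hkn : {subset kn <= s' |: kn} by move=> x Hx; rewrite !inE Hx orbT.
have Hold e : e \in op ->
    [/\ e.1.1 \in s' |: kn, gof ip' e.1.1 <= e.1.2 & ext_le (Some e.2) (h e.1.1 ih')].
  move=> /(inv_open Hinv) [Hk Hg Hh].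
  by split; [exact: Hkn | exact: le_trans (Hgle _ Hk) Hg | exact: ext_le_trans Hh (Hmono _)].
split.
- have [ks [Hks Hkks]] := inv_reach Hinv.
  exists (s' :: ks); split; first by apply: ri_update => //; exact: Hkks.
  move=> x; rewrite !inE => /orP [/eqP -> | /Hkks [-> | Hx]]; first by right; rewrite eqxx.
    by left.
  by right; rewrite Hx orbT.
- exact/Hkn/(inv_init_known Hinv).
- exact: le_trans (Hgle _ (inv_init_known Hinv)) (inv_init_g Hinv).
- exact: parent_update_path_cost (inv_g_path Hinv) Ht.
- move=> x; rewrite !inE => /orP [/eqP -> | Hx]; first exact: parent_update_tgt_defined Es.
  exact/parent_update_defined/(inv_known_defined Hinv).
- move=> e; case: Hop => [[-> _] | [v [Ev ->]]]; first exact: Hold.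
  by rewrite mem_rcons inE => /orP [/eqP -> | /Hold] //; split; rewrite /= ?setU11 ?Ev.
- move=> x Hx; rewrite (closed_gof_parent_update Hx).
  have [Hk Hopt] := inv_closed_opt Hinv Hx; split => //; exact: Hkn.
- move=> x t1 Hx Ht1 Hsrc Hnp; rewrite (closed_gof_parent_update Hx).
  case: (eqVneq t1 t) Hsrc Hnp => [-> | Nt] Hsrc Hnp.
    by rewrite setU11 -Hsrc; split => //; exact: gof_parent_update_tgt_le Es.
  have Hnp' : t1 \notin t :: pend by rewrite inE negb_or Nt.
  have [Hk Hle] := inv_closed_succ Hinv Hx Ht1 Hsrc Hnp'.
  by split; [exact: Hkn | exact: le_trans (Hgle _ Hk) Hle].
- move=> x Hx; case: (eqVneq x s') => [-> | Nx] Hxc Hh.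
    case: Hop => [[-> [E | [Hk Eg]]] | [v [Ev ->]]]; first by rewrite E in Hh.
      have [e He [Ex Hg]] := inv_open_known Hinv Hk Hxc (ext_le_finite (Hmono _) Hh).
      by exists e => //; rewrite Eg.
    by exists (s', gof ip' s', v); rewrite ?mem_rcons ?mem_head.
  have Hk : x \in kn by move: Hx; rewrite !inE (negbTE Nx).
  have [e He [Ex Hg]] := inv_open_known Hinv Hk Hxc (ext_le_finite (Hmono _) Hh).
  exists e; first by case: Hop => [[-> _] | [v [_ ->]]]; rewrite ?mem_rcons ?inE ?He ?orbT.
  by rewrite gof_parent_update_other.
- by move=> t1 Ht1; apply: (inv_pending Hinv); rewrite inE Ht1 orbT.
Qed.

Lemma improved_setD1_closed : gof ip' s' < gof ip s' -> cl :\ s' = cl.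
Proof.
move=> Hlt; apply/setP => x; rewrite in_setD1; case: eqVneq => // ->.
by apply/esym/negbTE; apply: contraTN Hlt => /closed_gof_parent_update ->; rewrite ltxx.
Qed.

End Successor.

Definition astar_invariant (c : config M sh) : Prop :=
  c_status c = Running ->
  astar_inv (c_ip c) (c_ih c) (c_known c) (c_closed c) (c_open c) (c_pending c).

Lemma astar_invariant_init : astar_invariant (init_config h).
Proof.
move=> _ /=; have gI : gof (parent_init R sI : pinfo R state (ts_L M)) sI = 0.
  by rewrite /gof /parent_init eqxx.
split => //=.
- exists [::]; split; first exact: ri_init.
  by move=> x; rewrite inE => /eqP ->; left.
- by rewrite inE.
- by rewrite gI.
- by move=> x g p; rewrite /parent_init; case: eqP => // -> [<- _]; exact: path_cost_init.
- by move=> x; rewrite inE => /eqP ->; rewrite /parent_init eqxx.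
- case E: (h sI (src_init sh)) => [v|] // e.
  by rewrite mem_seq1 => /eqP -> /=; rewrite inE E.
- by move=> x; rewrite in_set0.
- by move=> x t; rewrite in_set0.
- move=> x; rewrite inE => /eqP -> _.
  case: (h sI (src_init sh)) => [v|] // _.
  by eexists; [exact: mem_head | split].
Qed.

Lemma astar_step_invariant c c' :
  astar_invariant c -> astar_step h true c c' ->
  astar_invariant c' /\ c_closed c \subset c_closed c'.
Proof.
move=> Hc Hstep; case: Hstep Hc.
- by split.
- move=> ip ih kn cl op e _ _ Hcl /(_ erefl) /= Hinv; split => // _ /=.
  by apply: (astar_inv_rem Hinv); rewrite Hcl.
- move=> ip ih kn cl op e He _ Hcl s ip' ih' /= Hlt /(_ erefl) /= Hinv; split => // _ /=.
  have [Hs _ _] := inv_open Hinv He.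
  have Hinv' := astar_inv_refine Hinv Hs.
  rewrite /ip' /parent_refine; case E: (h s ih') => [v|]; last first.
    by apply: (astar_inv_rem Hinv'); rewrite E.
  rewrite -rem_rcons //; apply: (astar_inv_rem (astar_inv_push Hinv' Hs E)) => _ _.
  exists (s, gof ip s, v) => //; apply: rem_mem; last by rewrite mem_rcons mem_head.
  by apply: contraTneq Hlt => <- /=; rewrite E ltxx.
- by move=> *; split => //=; exact: subsetUr.
- move=> ip ih kn cl op e pend He Hmin Hcl s ip' ih' /= Hnlt _ Hperm /(_ erefl) /= Hinv.
  split=> [_ /= | ]; last exact: subsetUr.
  have [Hs _ _] := inv_open Hinv He.
  have Hinv' := astar_inv_refine Hinv Hs.
  have Hopt := popped_gof_opt Hinv' He Hmin Hcl Hnlt.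
  apply: (astar_inv_rem (astar_inv_close Hinv' erefl Hs Hopt Hperm)).
  by rewrite setU11.
- move=> ip ih kn cl op t pend s' old ip' ih' kn' g' /(_ erefl) /= Hinv.
  case E: (h s' ih') => [v|]; last first.
    by split => // _; apply: (astar_inv_succ Hinv); left; split => //; left.
  rewrite /old; case: (boolP (s' \in kn)) => Hk; last first.
    by split => // _; apply: (astar_inv_succ Hinv); right; exists v.
  have Hle : g' <= gof ip s' by apply: gof_parent_update_le (inv_known_defined Hinv Hk).
  case: ltP => Hlt.
    rewrite (improved_setD1_closed Hinv Hlt).
    by split => // _; apply: (astar_inv_succ Hinv); right; exists v.
  split => // _; apply: (astar_inv_succ Hinv); left; split => //; right; split => //.
  by apply/eqP; rewrite eq_le Hle Hlt.
Qed.

Lemma astar_reachable_invariant c : astar_reachable h true c -> astar_invariant c.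
Proof.
elim=> [|c0 c1 _ IH Hstep]; first exact: astar_invariant_init.
exact: (astar_step_invariant IH Hstep).1.
Qed.

End DynamicAstar.

Theorem theorem7 (R : realType) (M : TS R)
  (sh : source (ts_S M) (ts_L M)) (h : dyn_heuristic sh) :
  wf_TS M ->
  heuristic_nonneg h ->
  dyn_consistent h ->
  dyn_monotonic h ->
  forall c c', astar_reachable h true c -> astar_step h true c c' ->
    c_closed c \subset c_closed c'.
Proof.
move=> _ _ Hcons Hmono c c' Hreach Hstep.
have Hinv := astar_reachable_invariant Hcons Hmono Hreach.
exact: (astar_step_invariant Hcons Hmono Hinv Hstep).2.
Qed.
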